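(* Let $R$ be a perfect $\overline{\mathbb{F}}_p$-algebra which is radically closed (every polynomial $x^n - a \in R[x]$ splits into linear factors), and let $S$ be a commutative ring equipped with an isomorphism of multiplicative monoids $(R,\cdot) \cong (S, \cdot)$. Then $S$ has characteristic $p$. *)

From HB Require Import structures.
From mathcomp Require Import all_boot all_order all_algebra.
Set Implicit Arguments. Unset Strict Implicit. Unset Printing Implicit Defensive.
Import Order.TTheory GRing.Theory Num.Theory.
Local Open Scope ring_scope.

Definition is_alg_closure_Fp (p : nat) (K : closedFieldType) : Prop :=
  prime p /\ p \in [pchar K] /\
  forall x : K, exists q : {poly K},
    [/\ q != 0, (forall i, exists n : nat, q`_i = n%:R) & root q x].

Definition perfect_ring (p : nat) (R : comNzRingType) : Prop :=
  bijective (fun x : R => x ^+ p).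

Definition radically_closed (R : comNzRingType) : Prop :=
  forall (n : nat) (a : R), (0 < n)%N ->
    exists s : seq R, 'X^n - a%:P = \prod_(r <- s) ('X - r%:P).

Definition mul_monoid_iso (R S : comNzRingType) (f : R -> S) : Prop :=
  [/\ bijective f, f 1 = 1 & forall x y, f (x * y) = f x * f y].

From HB Require Import structures.
From mathcomp Require Import all_boot all_order all_algebra.
From mathcomp Require Import zify ring.
Import GRing.Theory.
Local Open Scope ring_scope.

Set Implicit Arguments. Unset Strict Implicit. Unset Printing Implicit Defensive.

(* Transported along f, a |-> f a%:R is a multiplicative character chi of F_p^* with
   values in S whose distinct values differ by regular elements; moreover y |-> y^p is
   injective on S and every element of S has a (p-1)-th root.  In
   S[zeta] = S[X]/(1 + X + ... + X^(p-1)) consider the Gauss sums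
   G_k = sum_a chi(a)^k zeta^a.  Each G_k G_1^(p-1-k) is fixed by all the substitutions
   zeta |-> zeta^b, hence is a constant; so G_1^(p-1) = beta^(p-1) for some beta in S, and
   G_1 G_(p-2) = p chi(-1)^(-1).  Hence prod_a (G_1 - chi(a) beta) = 0, and on the
   annihilator of each factor the constant y = sum_k beta^k G_k G_1^(p-1-k) acts as
   (p-1) beta^(p-1) zeta^b.  Peeling off the factors one at a time, and using that S has
   injective Frobenius and thus no nilpotents, gives first y = (p-1) beta^(p-1), then
   beta^(p-1) = 0 because p-1 is regular, and finally (G_1 G_(p-2))^(p-1) = 0, i.e.
   p = 0.  For p = 2 the injectivity of squaring gives -1 = 1 directly. *)

Section RegularRoots.
Variable A : comNzRingType.

Lemma prod_XsubC_dvd (I : eqType) (s : seq I) (r : I -> A) (P : {poly A}) :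
  uniq s -> {in s &, forall i j, i != j -> GRing.lreg (r i - r j)} ->
  {in s, forall i, root P (r i)} ->
  exists Q, P = Q * \prod_(i <- s) ('X - (r i)%:P).
Proof.
elim: s P => [|i s IHs] P; first by exists P; rewrite big_nil mulr1.
move=> /= /andP[i_s uniq_s] reg_s roots_s.
have /factor_theorem[Q1 defP] := roots_s i (mem_head i s).
have reg_s' : {in s &, forall j k, j != k -> GRing.lreg (r j - r k)}.
  by move=> j k js ks; apply: reg_s; rewrite inE ?js ?ks orbT.
have roots_s' : {in s, forall j, root Q1 (r j)}.
  move=> j js; have ij : i != j by apply: contraNneq i_s => ->.
  have reg_ji : GRing.lreg (r j - r i).
    by apply: reg_s; rewrite ?inE ?js ?eqxx ?orbT // eq_sym.
  move: (roots_s j); rewrite inE js orbT => /(_ isT) /rootP.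
  by rewrite defP hornerM hornerXsubC mulrC => /eqP; rewrite mulrI_eq0 // => /eqP.
have [Q defQ1] := IHs Q1 uniq_s reg_s' roots_s'.
by exists Q; rewrite defP defQ1 big_cons mulrAC mulrA.
Qed.

Lemma monic_eq_prod_XsubC (I : eqType) (s : seq I) (r : I -> A) (P : {poly A}) :
  uniq s -> {in s &, forall i j, i != j -> GRing.lreg (r i - r j)} ->
  {in s, forall i, root P (r i)} -> P \is monic -> size P = (size s).+1 ->
  P = \prod_(i <- s) ('X - (r i)%:P).
Proof.
move=> uniq_s reg_s roots_s monP sizeP.
have [Q defP] := prod_XsubC_dvd uniq_s reg_s roots_s.
have monM : \prod_(i <- s) ('X - (r i)%:P) \is monic := monic_prod_XsubC _ _ _.
have Q_neq0 : Q != 0.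
  by apply: contraTneq monP => Q0; rewrite defP Q0 mul0r monicE lead_coef0 eq_sym oner_eq0.
have : size Q = 1%N.
  by have := size_Mmonic Q_neq0 monM; rewrite -defP sizeP size_prod_XsubC; lia.
move=> /eqP/size_poly1P[c _ defQ].
have := lead_coef_Mmonic Q monM; rewrite -defP (monicP monP) defQ lead_coefC.
by move=> c1; rewrite defP defQ -c1 mul1r.
Qed.

Lemma prod_eq0_expr_eq0 (I : eqType) (s : seq I) (x : I -> A) (e : A) :
  (forall i l, i \in s -> x i * l = 0 -> e * l = 0) ->
  \prod_(i <- s) x i = 0 -> e ^+ size s = 0.
Proof.
move=> ann prod0.
suff prod_ann l : \prod_(i <- s) x i * l = 0 -> e ^+ size s * l = 0.
  by have := prod_ann 1; rewrite !mulr1; apply.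
elim: s ann {prod0} l => [|i s IHs] ann l; first by rewrite big_nil.
rewrite big_cons exprSr -!mulrA => /(ann i _ (mem_head i s)).
rewrite mulrCA; apply: IHs => j l' js; exact/ann/mem_behead.
Qed.

Lemma eigen_exprM (x u l : A) n : x * l = u * l -> x ^+ n * l = u ^+ n * l.
Proof.
move=> xl; elim: n => [|n IHn]; first by rewrite !expr0.
by rewrite !exprS -!mulrA IHn mulrCA xl mulrCA.
Qed.

Lemma frobenius_inj_reduced (q n : nat) (x : A) :
  (1 < q)%N -> injective (fun y : A => y ^+ q) -> x ^+ n = 0 -> x = 0.
Proof.
move=> q_gt1 frob_inj; elim: n => [|n IHn]; first by move/eqP; rewrite expr0 oner_eq0.
case: n IHn => [|n] IHn; first by rewrite expr1.
move=> xn0; apply: IHn; apply: frob_inj; rewrite /= expr0n -exprM.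
have -> : (n.+1 * q = n.+2 + (n.+1 * q - n.+2))%N by nia.
by rewrite exprD xn0 mul0r; case: q q_gt1.
Qed.

End RegularRoots.

Section GeometricPolynomial.
Variable A : comNzRingType.

Definition geom_poly n : {poly A} := \sum_(i < n) 'X^i.

Lemma geom_polyE n : geom_poly n = \poly_(i < n) 1.
Proof. by rewrite poly_def; apply: eq_bigr => i _; rewrite scale1r. Qed.

Lemma size_geom_poly n : size (geom_poly n) = n.
Proof.
by rewrite geom_polyE; case: n => [|n]; rewrite ?poly0 ?size_poly0 ?size_poly_eq ?oner_neq0.
Qed.

Lemma monic_geom_poly n : (0 < n)%N -> geom_poly n \is monic.
Proof.
case: n => // n _; apply/monicP.
by rewrite /lead_coef size_geom_poly geom_polyE coef_poly ltnSn.
Qed.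

Lemma mul_XsubC1_geom_poly n : ('X - 1) * geom_poly n = 'X^n - 1.
Proof.
elim: n => [|n IHn]; first by rewrite /geom_poly big_ord0 mulr0 expr0 subrr.
rewrite /geom_poly big_ord_recr mulrDr IHn mulrBl -exprS mul1r.
by rewrite addrC addrA subrK.
Qed.

Lemma horner_geom_poly1 n : (geom_poly n).[1] = n%:R.
Proof.
rewrite horner_sum (eq_bigr (fun _ => 1)) ?sumr_const ?card_ord //.
by move=> i _; rewrite hornerXn expr1n.
Qed.

End GeometricPolynomial.

Section CyclotomicQuotient.
Variables (S : comNzRingType) (p : nat).
Hypothesis p_pr : prime p.

(* T = S[X]/(Phi) = S[zeta]; ev P is P(zeta), and P \Po 'X^b stands for the image of
   P(zeta) under zeta |-> zeta^b. *)
Local Notation Phi := (geom_poly S p).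
Local Notation T := {poly %/ Phi}.
Local Notation ev := (in_qpoly Phi).
Local Notation zeta := (qpolyX Phi).

Let p_gt0 : (0 < p)%N := prime_gt0 p_pr.
Let p_gt1 : (1 < p)%N := prime_gt1 p_pr.
Let monic_Phi : Phi \is monic := monic_geom_poly S p_gt0.

Lemma mk_monic_geom_poly : mk_monic Phi = Phi.
Proof. by rewrite /mk_monic size_geom_poly p_gt1 monic_Phi. Qed.

Lemma ev_eq0 P : ev P = 0 -> exists Q, P = Q * Phi.
Proof.
move/(congr1 val); rewrite /= mk_monic_geom_poly => mod0.
by exists (Pdiv.Ring.rdivp P Phi); rewrite {1}(Pdiv.RingMonic.rdivp_eq monic_Phi P) mod0 addr0.
Qed.

Lemma ev_geom_poly : ev Phi = 0.
Proof. by apply: val_inj; rewrite /= mk_monic_geom_poly Pdiv.RingMonic.rmodpp. Qed.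

Lemma alg_qpoly_inj : injective (in_alg T).
Proof.
move=> c d /(congr1 val) /=.
by rewrite -!mul_polyC !mulr1 => /polyC_inj.
Qed.

Lemma zeta_expp : zeta ^+ p = 1.
Proof.
have := congr1 ev (mul_XsubC1_geom_poly S p).
rewrite rmorphM /= ev_geom_poly mulr0 rmorphB rmorphXn rmorph1 => /esym/eqP.
by rewrite subr_eq0 => /eqP.
Qed.

Lemma zetaX_mod n : zeta ^+ n = zeta ^+ (n %% p).
Proof. by rewrite {1}(divn_eq n p) exprD mulnC exprM zeta_expp expr1n mul1r. Qed.

Lemma big_ord_pos (V : nmodType) (F : 'I_p -> V) :
  \sum_(a < p) F a = F (Ordinal p_gt0) + \sum_(a < p | (0 < a)%N) F a.
Proof.
rewrite (bigD1 (Ordinal p_gt0)) //=; congr (_ + _); apply: eq_bigl => a.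
by rewrite lt0n -val_eqE.
Qed.

Lemma sum_zeta : \sum_(a < p) zeta ^+ a = 0.
Proof.
rewrite -[RHS]ev_geom_poly; transitivity (ev (\sum_(a < p) 'X^a)) => //.
by rewrite rmorph_sum; apply: eq_bigr => a _; rewrite rmorphXn.
Qed.

Lemma sum_zeta_pos : \sum_(a < p | (0 < a)%N) zeta ^+ a = -1.
Proof. by have /eqP := sum_zeta; rewrite big_ord_pos expr0 addrC addr_eq0 => /eqP. Qed.

Definition mulmod (b : nat) (a : 'I_p) : 'I_p := Ordinal (ltn_pmod (a * b) p_gt0).

Lemma mulmod_inj b : ~~ (p %| b)%N -> injective (mulmod b).
Proof.
move=> pNb a a' /(congr1 val) /= eq_ab; apply/val_inj/eqP.
wlog le_a'a : a a' eq_ab / (a' <= a)%N.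
  by move=> wl; case: (leqP a' a) => [|/ltnW] ?; [|rewrite eq_sym]; apply: wl.
rewrite eqn_leq le_a'a andbT -subn_eq0; move/eqP: eq_ab.
rewrite eqn_mod_dvd ?leq_mul2r ?le_a'a ?orbT // -mulnBl Euclid_dvdM //.
rewrite (negPf pNb) orbF; apply: contraLR; rewrite -lt0n => ?.
by rewrite gtnNdvd // (leq_ltn_trans (leq_subr _ _) (ltn_ord a)).
Qed.

Lemma mulmod_pos b a : ~~ (p %| b)%N -> (0 < mulmod b a)%N = (0 < a)%N.
Proof.
move=> pNb; rewrite /= !lt0n -/(dvdn p _) Euclid_dvdM // (negPf pNb) orbF.
by case: (posnP a) => [->|a_gt0]; rewrite ?dvdn0 // gtnNdvd.
Qed.

Lemma big_mulmod (V : nmodType) b (F : 'I_p -> V) : ~~ (p %| b)%N ->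
  \sum_(a < p | (0 < a)%N) F (mulmod b a) = \sum_(a < p | (0 < a)%N) F a.
Proof.
move=> pNb; rewrite [RHS](reindex_inj (mulmod_inj pNb)).
by apply: eq_bigl => a; rewrite mulmod_pos.
Qed.

Lemma mulmod_surj b (c : 'I_p) : ~~ (p %| b)%N -> exists a, mulmod b a = c.
Proof. by move=> pNb; exists (invF (mulmod_inj pNb) c); rewrite f_invF. Qed.

Lemma qpoly_sum_zeta (x : T) : x = \sum_(a < p) (x : {poly S})`_a *: zeta ^+ a.
Proof.
have sizex : (size (x : {poly S}) <= p)%N.
  apply: ltnW; apply: (leq_trans (size_mk_monic x)).
  by rewrite mk_monic_geom_poly size_geom_poly.
transitivity (ev (\sum_(a < p) (x : {poly S})`_a *: 'X^a)).
  have xE : \poly_(a < p) (x : {poly S})`_a = x.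
    by apply/polyP => i; rewrite coef_poly; case: ltnP => // /(leq_trans sizex) /leq_sizeP->.
  by apply: val_inj; rewrite /= -poly_def xE Pdiv.CommonRing.rmodp_small ?size_mk_monic.
by rewrite linear_sum; apply: eq_bigr => a _; rewrite linearZ rmorphXn.
Qed.

Lemma zeta_span (x : T) :
  exists r : 'I_p -> S, x = \sum_(a < p | (0 < a)%N) r a *: zeta ^+ a.
Proof.
exists (fun a => (x : {poly S})`_a - (x : {poly S})`_0).
have one_zeta : 1 = - \sum_(a < p | (0 < a)%N) zeta ^+ a by rewrite sum_zeta_pos opprK.
rewrite {1}[x]qpoly_sum_zeta big_ord_pos /= expr0 {1}one_zeta scalerN scaler_sumr.
by under [RHS]eq_bigr do rewrite scalerBl; rewrite sumrB addrC.
Qed.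

Lemma zeta_free (u : 'I_p -> S) :
  \sum_(a < p | (0 < a)%N) u a *: zeta ^+ a = 0 -> forall a : 'I_p, (0 < a)%N -> u a = 0.
Proof.
move=> sum0 a a_gt0.
(* Dividing by the unit zeta brings the exponents down to 0 .. p-2, below deg Phi. *)
pose V := \sum_(b < p | (0 < b)%N) u b *: ('X^(b.-1) : {poly S}).
have evV : ev V = 0.
  have evVzeta : ev V * zeta = 0.
    rewrite -sum0 linear_sum mulr_suml; apply: eq_bigr => b b_gt0.
    by rewrite linearZ rmorphXn -scalerAl -exprSr prednK.
  have zetaV : zeta * zeta ^+ p.-1 = 1 by rewrite -exprS prednK ?zeta_expp.
  by rewrite -[ev V]mulr1 -zetaV mulrA evVzeta mul0r.
have sizeV : (size V < size (mk_monic Phi))%N.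
  rewrite mk_monic_geom_poly size_geom_poly -(prednK p_gt0) ltnS.
  apply/leq_sizeP => j le_j; rewrite coef_sumMXn big1 // => b /andP[_ /eqP eq_bj].
  by move: (ltn_ord b) le_j; rewrite -eq_bj; lia.
have := congr1 (fun y : T => (y : {poly S})`_a.-1) evV.
rewrite /= Pdiv.CommonRing.rmodp_small // coef0 coef_sumMXn (big_pred1 a) // => b /=.
apply/andP/eqP => [[b_gt0 /eqP eq_ba]|->] //.
by apply/val_inj; rewrite /= -(prednK b_gt0) -(prednK a_gt0) eq_ba.
Qed.

Lemma sum_zetaXM n :
  \sum_(a < p) zeta ^+ (a * n) = if (p %| n)%N then p%:R else 0.
Proof.
case: ifPn => [pn|pNn].
  rewrite (eq_bigr (fun _ => 1)) ?sumr_const ?card_ord // => a _.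
  by rewrite zetaX_mod (eqP (dvdn_mull _ pn)) expr0.
rewrite -[RHS]sum_zeta [RHS](reindex_inj (mulmod_inj pNn)) /=.
by apply: eq_bigr => a _; rewrite zetaX_mod.
Qed.

Lemma sum_zetaXM_pos n :
  \sum_(a < p | (0 < a)%N) zeta ^+ (a * n) = (if (p %| n)%N then p%:R else 0) - 1.
Proof.
have := sum_zetaXM n; rewrite big_ord_pos /= mul0n expr0 addrC.
exact: canRL (addrK 1).
Qed.

Lemma ev_comp_geom_poly b : ~~ (p %| b)%N -> ev (Phi \Po 'X^b) = 0.
Proof.
move=> pNb; have := sum_zetaXM b; rewrite (negPf pNb) => <-.
rewrite linear_sum rmorph_sum; apply: eq_bigr => a _.
by rewrite /= comp_Xn_poly -exprM rmorphXn mulnC.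
Qed.

Lemma ev_comp_eq b P Q : ~~ (p %| b)%N -> ev P = ev Q -> ev (P \Po 'X^b) = ev (Q \Po 'X^b).
Proof.
move=> pNb /eqP; rewrite -subr_eq0 -rmorphB => /eqP/ev_eq0[D PQ].
apply/eqP; rewrite -subr_eq0 -rmorphB -linearB /= PQ comp_polyM rmorphM /=.
by rewrite ev_comp_geom_poly // mulr0.
Qed.

Lemma ev_comp_sum (r : 'I_p -> S) b :
  ev ((\sum_(a < p | (0 < a)%N) r a *: 'X^a) \Po 'X^b)
  = \sum_(a < p | (0 < a)%N) r a *: zeta ^+ mulmod b a.
Proof.
rewrite !linear_sum; apply: eq_bigr => a _.
by rewrite !linearZ /= comp_Xn_poly -exprM rmorphXn mulnC -zetaX_mod.
Qed.

Lemma ev_comp_fixed P :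
  (forall b, (0 < b < p)%N -> ev (P \Po 'X^b) = ev P) -> exists c, ev P = c%:A.
Proof.
move=> fixP; have [r evP] := zeta_span (ev P).
pose R := \sum_(a < p | (0 < a)%N) r a *: ('X^a : {poly S}).
have evR : ev P = ev R.
  by rewrite evP linear_sum; apply: eq_bigr => a _; rewrite linearZ rmorphXn.
pose one := Ordinal p_gt1.
(* For b c = 1 mod p, comparing coefficients in the fixed-point equation at b gives
   r c = r 1. *)
have r_const (c : 'I_p) : (0 < c)%N -> r c = r one.
  move=> c_gt0; have pNc : ~~ (p %| c)%N by rewrite gtnNdvd.
  have [b cb1] := mulmod_surj one pNc.
  have b_gt0 : (0 < b)%N by rewrite -(mulmod_pos b pNc) cb1.
  have pNb : ~~ (p %| b)%N by rewrite gtnNdvd.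
  have mulmod_cb a : mulmod b (mulmod c a) = a.
    apply: val_inj; move/(congr1 val): cb1 => /= cb1.
    by rewrite modnMml -mulnA [(c * b)%N]mulnC -modnMmr cb1 muln1 modn_small.
  have c_one : mulmod c one = c by apply: val_inj; rewrite /= mul1n modn_small.
  have := fixP b; rewrite b_gt0 ltn_ord => /(_ isT).
  rewrite (ev_comp_eq pNb evR) ev_comp_sum evP.
  rewrite -(big_mulmod (fun a => r a *: zeta ^+ mulmod b a) pNc).
  under eq_bigr do rewrite mulmod_cb.
  move/eqP; rewrite -subr_eq0 -sumrB; under eq_bigr do rewrite -scalerBl.
  by move/eqP/zeta_free/(_ one isT)/eqP; rewrite c_one subr_eq0 => /eqP.
exists (- r one); rewrite evP.
under eq_bigr => a a_gt0 do rewrite r_const //.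
by rewrite -scaler_sumr sum_zeta_pos scalerN scaleNr.
Qed.

Lemma zeta_fixed b (m : T) : ~~ (p %| b)%N -> zeta ^+ b * m = m -> zeta * m = m.
Proof.
move=> pNb fix_m; have [c cb] := mulmod_surj (Ordinal p_gt1) pNb.
have fix_mn n : zeta ^+ (b * n) * m = m.
  by elim: n => [|n IHn]; rewrite ?muln0 ?mul1r // mulnS exprD -mulrA IHn.
have /= cb1 := congr1 val cb.
by rewrite -[RHS](fix_mn c) (zetaX_mod (b * c)) mulnC cb1 expr1.
Qed.

End CyclotomicQuotient.

Section GaussSums.
Variables (S : comNzRingType) (p : nat) (chi : nat -> S).
Hypothesis p_pr : prime p.
Hypothesis p_gt2 : (2 < p)%N.
Hypothesis chiM : forall a b, chi (a * b)%N = chi a * chi b.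
Hypothesis chi_mod : forall a, chi (a %% p)%N = chi a.
Hypothesis chi1 : chi 1 = 1.
Hypothesis chi_expp1 : forall a, ~~ (p %| a)%N -> chi a ^+ p.-1 = 1.
Hypothesis chi_reg : forall a b, (a %% p != b %% p)%N -> GRing.lreg (chi a - chi b).

Local Notation Phi := (geom_poly S p).
Local Notation T := {poly %/ Phi}.
Local Notation ev := (in_qpoly Phi).
Local Notation zeta := (qpolyX Phi).
Local Notation mulmod := (mulmod p_pr).

Let p_gt0 : (0 < p)%N := prime_gt0 p_pr.

Definition gauss_poly k : {poly S} := \sum_(a < p | (0 < a)%N) chi a ^+ k *: 'X^a.
Definition gauss_sum k : T := \sum_(a < p | (0 < a)%N) chi a ^+ k *: zeta ^+ a.

Lemma ev_gauss_poly k : ev (gauss_poly k) = gauss_sum k.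
Proof. by rewrite linear_sum; apply: eq_bigr => a _; rewrite linearZ rmorphXn. Qed.

Lemma chi_reg_lt a b : (a < p)%N -> (b < p)%N -> a != b -> GRing.lreg (chi a - chi b).
Proof. by move=> ap bp ab; apply: chi_reg; rewrite !modn_small. Qed.

Lemma chi_mulmod b a : chi (mulmod b a) = chi a * chi b.
Proof. by rewrite /= chi_mod chiM. Qed.

Lemma chiVr a : ~~ (p %| a)%N -> chi a ^+ p.-2 * chi a = 1.
Proof. by move=> pNa; rewrite -exprSr prednK ?chi_expp1 //; lia. Qed.

Lemma sum_chiX k b : ~~ (p %| b)%N -> GRing.lreg (chi b ^+ k - 1) ->
  \sum_(a < p | (0 < a)%N) chi a ^+ k = 0.
Proof.
move=> pNb reg_b; apply: reg_b; rewrite mulr0 mulrBl mul1r.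
rewrite -{2}(big_mulmod p_pr (fun a => chi a ^+ k) pNb) mulr_sumr.
by apply/eqP; rewrite subr_eq0; apply/eqP/eq_bigr => a _; rewrite chi_mulmod exprMn mulrC.
Qed.

Let pN2 : ~~ (p %| 2)%N. Proof. by rewrite gtnNdvd. Qed.

Lemma sum_chi : \sum_(a < p | (0 < a)%N) chi a = 0.
Proof.
under eq_bigr do rewrite -[chi _]expr1.
by apply: (sum_chiX pN2); rewrite expr1 -chi1; apply: chi_reg_lt; lia.
Qed.

Lemma sum_chiV : \sum_(a < p | (0 < a)%N) chi a ^+ p.-2 = 0.
Proof.
apply: (sum_chiX pN2); apply: (@GRing.lregMl _ (chi 2)).
by rewrite mulrBr mulrC chiVr // mulr1 -chi1; apply: chi_reg_lt; lia.
Qed.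

Lemma gauss_sum0 : gauss_sum 0 = -1.
Proof. by rewrite -(sum_zeta_pos S p_pr); apply: eq_bigr => a _; rewrite expr0 scale1r. Qed.

Lemma gauss_sum_comp k b : ~~ (p %| b)%N ->
  chi b ^+ k *: ev (gauss_poly k \Po 'X^b) = gauss_sum k.
Proof.
move=> pNb; rewrite /gauss_poly ev_comp_sum scaler_sumr -[RHS](big_mulmod p_pr _ pNb).
by apply: eq_bigr => a _; rewrite scalerA -exprMn chi_mulmod mulrC.
Qed.

Lemma gauss_sum_prod_const k m : (k + m)%N = p.-1 ->
  exists c, gauss_sum k * gauss_sum 1 ^+ m = c%:A.
Proof.
move=> km; rewrite -!ev_gauss_poly -rmorphXn -rmorphM.
apply: ev_comp_fixed => // b /andP[b_gt0 bp]; have pNb : ~~ (p %| b)%N by rewrite gtnNdvd.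
rewrite !rmorphM !rmorphXn /= !ev_gauss_poly.
rewrite -(gauss_sum_comp k pNb) -(gauss_sum_comp 1 pNb).
rewrite exprZn -scalerAr -scalerAl scalerA -exprM -exprD mul1n addnC km.
by rewrite chi_expp1 // scale1r.
Qed.

Lemma gauss_sum_expp1_const : exists c, gauss_sum 1 ^+ p.-1 = c%:A.
Proof.
have [c Gc] := gauss_sum_prod_const (add0n p.-1).
by exists (- c); rewrite gauss_sum0 mulN1r in Gc; rewrite scaleNr -Gc opprK.
Qed.

Lemma chi_orthogonality a b : (0 < a < p)%N -> (0 < b < p)%N ->
  \sum_(k < p.-1) chi b ^+ (p.-1 - k) * chi a ^+ k = if a == b then (p.-1)%:R else 0.
Proof.
move=> /andP[a_gt0 ap] /andP[b_gt0 bp].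
have [pNa pNb] : ~~ (p %| a)%N /\ ~~ (p %| b)%N by rewrite !gtnNdvd.
case: eqP => [<-|/eqP ab].
  rewrite (eq_bigr (fun _ => 1)) ?sumr_const ?card_ord // => k _.
  by rewrite -exprD subnK ?chi_expp1 // ltnW.
apply: (chi_reg_lt bp ap); first by rewrite eq_sym.
have -> : \sum_(k < p.-1) chi b ^+ (p.-1 - k) * chi a ^+ k
          = chi b * \sum_(k < p.-1) chi b ^+ (p.-1.-1 - k) * chi a ^+ k.
  rewrite mulr_sumr; apply: eq_bigr => k _; rewrite mulrA -exprS.
  by congr (_ ^+ _ * _); move: (ltn_ord k); lia.
by rewrite mulr0 mulrCA -subrXX !chi_expp1 // subrr mulr0.
Qed.

Lemma gauss_sum_inversion b : (0 < b < p)%N ->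
  \sum_(k < p.-1) chi b ^+ (p.-1 - k) *: gauss_sum k = (p.-1)%:R *: zeta ^+ b.
Proof.
move=> /andP[b_gt0 bp]; rewrite /gauss_sum.
under eq_bigr do rewrite scaler_sumr; rewrite exchange_big /=.
under eq_bigr do (under eq_bigr do rewrite scalerA; rewrite -scaler_suml).
rewrite (bigD1 (Ordinal bp)) //= chi_orthogonality ?b_gt0 ?bp // eqxx big1 ?addr0 // => a.
case/andP=> a_gt0 ab; rewrite chi_orthogonality ?a_gt0 ?ltn_ord ?b_gt0 ?bp // ifN ?scale0r //.
Qed.

Lemma gauss_sum_mulVE : gauss_sum 1 * gauss_sum p.-2 =
  \sum_(t < p | (0 < t)%N) chi t ^+ p.-2 *: \sum_(a < p | (0 < a)%N) zeta ^+ (a * t.+1).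
Proof.
transitivity (\sum_(a < p | (0 < a)%N) \sum_(t < p | (0 < t)%N)
                chi t ^+ p.-2 *: zeta ^+ (a * t.+1)).
  rewrite mulr_suml; apply: eq_bigr => a a_gt0.
  have pNa : ~~ (p %| a)%N by rewrite gtnNdvd.
  rewrite mulr_sumr -(big_mulmod p_pr _ pNa); apply: eq_bigr => t _.
  rewrite expr1 -scalerAl -scalerAr scalerA chi_mulmod exprMn -exprD.
  congr (_ *: _); first by rewrite mulrCA [chi a * _]mulrC chiVr // mulr1.
  rewrite (zetaX_mod S p_pr (a + _)) (zetaX_mod S p_pr (a * _)) /=.
  by rewrite modnDmr mulnS [(t * a)%N]mulnC.
by rewrite exchange_big /=; apply: eq_bigr => t _; rewrite scaler_sumr.
Qed.

Lemma gauss_sum_mulV : gauss_sum 1 * gauss_sum p.-2 = (p%:R * chi p.-1 ^+ p.-2)%:A.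
Proof.
rewrite gauss_sum_mulVE; under eq_bigr do rewrite (sum_zetaXM_pos S p_pr) scalerBr.
rewrite sumrB -scaler_suml sum_chiV scale0r subr0.
have pp1 : (p.-1 < p)%N by rewrite ltn_predL.
rewrite (bigD1 (Ordinal pp1)) /=; last by lia.
rewrite prednK // dvdnn big1 ?addr0 => [|t /andP[t_gt0 tNpp1]].
  by rewrite mulrC -scalerA scaler_nat.
rewrite ifN ?scaler0 // gtnNdvd //.
by move: (ltn_ord t) tNpp1; rewrite -val_eqE /=; lia.
Qed.

Lemma prod_sub_chi (A : comAlgType S) (x y : A) :
  \prod_(1 <= a < p) (x - chi a *: y) = x ^+ p.-1 - y ^+ p.-1.
Proof.
have split_XX : 'X^(p.-1) - ('X^(p.-1))%:P
                = \prod_(1 <= a < p) ('X - (chi a *: 'X)%:P) :> {poly {poly S}}.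
  apply: monic_eq_prod_XsubC; first exact: iota_uniq.
  - move=> a b; rewrite !mem_index_iota => /andP[_ ap] /andP[_ bp] ab.
    rewrite -scalerBl; apply/lreg_lead; rewrite lead_coef_lreg ?lead_coefX ?mulr1.
      exact: chi_reg_lt.
    exact: chi_reg_lt.
  - move=> a; rewrite mem_index_iota => /andP[a_gt0 ap]; apply/rootP.
    by rewrite !hornerE exprZn chi_expp1 ?scale1r ?subrr // gtnNdvd.
  - by apply: monicXnsubC; lia.
  by rewrite size_XnsubC ?size_iota ?subn1 //; lia.
have := congr1 (fun Q => (map_poly (horner_alg y) Q).[x]) split_XX.
have evX (n : nat) : horner_alg y 'X^n = y ^+ n by rewrite rmorphXn /= horner_algX.
rewrite /= rmorphB rmorph_prod /= map_polyXn map_polyC /= evX.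
rewrite hornerD hornerN hornerXn hornerC horner_prod => ->.
apply: eq_bigr => a _; rewrite rmorphB /= map_polyX map_polyC /= hornerXsubC.
by rewrite -mul_polyC rmorphM /= horner_algC horner_algX mulr_algl.
Qed.

Lemma lreg_pred_p : GRing.lreg ((p.-1)%:R : S).
Proof.
have := prod_sub_chi 'X (1 : {poly S}); rewrite expr1n big_ltn; last by lia.
rewrite chi1 scale1r -(mul_XsubC1_geom_poly S) => /(monic_lreg (monicXsubC 1)) prodE.
rewrite -horner_geom_poly1 -prodE horner_prod big_seq.
apply: (big_ind (@GRing.lreg S)); [exact: GRing.lreg1 | exact: GRing.lregM |].
move=> a; rewrite mem_index_iota => /andP[a_gt1 ap].
by rewrite alg_polyC hornerXsubC -chi1; apply: chi_reg_lt; lia.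
Qed.

Lemma gauss_sum_fixed (m : T) : zeta * m = m -> gauss_sum 1 * m = 0.
Proof.
move=> fix_m; have fix_mn n : zeta ^+ n * m = m.
  by elim: n => [|n IHn]; rewrite ?mul1r // exprS -mulrA IHn.
rewrite mulr_suml -[RHS](scale0r m) -sum_chi scaler_suml; apply: eq_bigr => a _.
by rewrite -scalerAl fix_mn expr1.
Qed.

Hypothesis frob_inj : injective (fun x : S => x ^+ p).
Let p_gt1 : (1 < p)%N := prime_gt1 p_pr.

Section Resolvent.
Variable beta : S.
Hypothesis gauss_sum_expp1 : gauss_sum 1 ^+ p.-1 = (beta ^+ p.-1)%:A.

Definition resolvent : T :=
  \sum_(k < p.-1) beta ^+ k *: (gauss_sum k * gauss_sum 1 ^+ (p.-1 - k)).

Lemma resolvent_const : exists y, resolvent = y%:A.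
Proof.
apply: (big_ind (fun t : T => exists y, t = y%:A)).
- by exists 0; rewrite scale0r.
- by move=> _ _ [y1 ->] [y2 ->]; exists (y1 + y2); rewrite scalerDl.
move=> k _; have [|c ->] := @gauss_sum_prod_const k (p.-1 - k).
  by rewrite subnKC // ltnW.
by exists (beta ^+ k * c); rewrite scalerA.
Qed.

Lemma resolvent_eigen b l : (0 < b < p)%N ->
  (gauss_sum 1 - (chi b * beta)%:A) * l = 0 ->
  resolvent * l = (beta ^+ p.-1 * (p.-1)%:R) *: zeta ^+ b * l.
Proof.
move=> bp eig; have G1l : gauss_sum 1 * l = (chi b * beta)%:A * l.
  by apply/eqP; rewrite -subr_eq0 -mulrBl eig.
rewrite /resolvent mulr_suml.
transitivity (\sum_(k < p.-1) beta ^+ p.-1 *: (chi b ^+ (p.-1 - k) *: gauss_sum k * l)).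
  apply: eq_bigr => k _.
  rewrite -scalerAl -mulrA (eigen_exprM _ G1l) exprZn expr1n mulr_algl.
  rewrite -scalerAr scalerA -scalerAl scalerA; congr (_ *: _).
  by rewrite exprMn mulrCA -exprD subnKC ?(ltnW (ltn_ord k)) // mulrC.
by rewrite -scaler_sumr -mulr_suml gauss_sum_inversion // -!scalerAl scalerA.
Qed.

Lemma prod_gauss_sub_chi : \prod_(1 <= a < p) (gauss_sum 1 - (chi a * beta)%:A) = 0.
Proof.
under eq_bigr do rewrite -scalerA.
by rewrite prod_sub_chi exprZn expr1n gauss_sum_expp1 subrr.
Qed.

Lemma gauss_annihilator_eq0 e :
  (forall b l, (0 < b < p)%N -> (gauss_sum 1 - (chi b * beta)%:A) * l = 0 -> e%:A * l = 0) ->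
  e = 0.
Proof.
move=> ann; apply: (frobenius_inj_reduced (n := size (index_iota 1 p)) p_gt1 frob_inj).
apply: (@alg_qpoly_inj S p); rewrite rmorph0 rmorphXn /=.
apply: prod_eq0_expr_eq0 prod_gauss_sub_chi => b l.
by rewrite mem_index_iota; apply: ann.
Qed.

Lemma resolventE : resolvent = (beta ^+ p.-1 * (p.-1)%:R)%:A.
Proof.
have [y Ey] := resolvent_const; rewrite Ey; congr (_ *: _).
set W := beta ^+ p.-1 * (p.-1)%:R.
apply: frob_inj; apply/eqP; rewrite /= -subr_eq0; apply/eqP.
apply: gauss_annihilator_eq0 => b l bp /(resolvent_eigen bp); rewrite Ey => yl.
have algX (c : S) n : (c ^+ n)%:A = c%:A ^+ n :> T by rewrite exprZn expr1n.
rewrite scalerBl mulrBl algX (eigen_exprM _ yl) exprZn -exprM.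
by rewrite (zetaX_mod S p_pr) modnMl expr0 subrr.
Qed.

Lemma root_expp1_eq0 : beta ^+ p.-1 = 0.
Proof.
set c := beta ^+ p.-1; set W := c * (p.-1)%:R.
have cW0 : c * W = 0.
  apply: gauss_annihilator_eq0 => b l bp eig; have /andP[b_gt0 b_lt_p] := bp.
  have pNb : ~~ (p %| b)%N by rewrite gtnNdvd.
  have G1l : gauss_sum 1 * l = (chi b * beta)%:A * l.
    by apply/eqP; rewrite -subr_eq0 -mulrBl eig.
  have := resolvent_eigen bp eig; rewrite resolventE -/c -/W => Wl.
  have fix_Wl : zeta * (W%:A * l) = W%:A * l.
    by apply: (zeta_fixed p_pr pNb); rewrite [RHS]Wl mulr_algl -scalerAr -scalerAl.
  have := gauss_sum_fixed fix_Wl; rewrite mulrCA G1l.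
  move/(congr1 (fun t => (chi b ^+ p.-2 * beta ^+ p.-2)%:A * t)).
  rewrite mulr0 !mulr_algl !scalerA => <-; congr (_ *: _).
  have e1 := chiVr pNb; have e2 : beta ^+ p.-2 * beta = c by rewrite -exprSr prednK //; lia.
  transitivity ((chi b ^+ p.-2 * chi b) * ((beta ^+ p.-2 * beta) * W)); last by ring.
  by rewrite e1 e2 mul1r.
apply: (frobenius_inj_reduced (n := 2) p_gt1 frob_inj).
by apply: lreg_pred_p; rewrite mulr0 mulrC expr2 -mulrA.
Qed.

End Resolvent.

Hypothesis roots_pred_p : forall c : S, exists beta, beta ^+ p.-1 = c.

Lemma natr_p_eq0 : p%:R = 0 :> S.
Proof.
have [c Gc] := gauss_sum_expp1_const; have [beta bec] := roots_pred_p c.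
rewrite -bec in Gc; have be0 := root_expp1_eq0 Gc; rewrite be0 scale0r in Gc.
have pL0 : p%:R * chi p.-1 ^+ p.-2 = 0.
  apply: (frobenius_inj_reduced (n := p.-1) p_gt1 frob_inj).
  have := congr1 (fun t => t ^+ p.-1) gauss_sum_mulV.
  rewrite /= exprMn Gc mul0r exprZn expr1n => /esym.
  by rewrite -[0 : T](scale0r 1) => /(@alg_qpoly_inj S p).
have pNpp1 : ~~ (p %| p.-1)%N by rewrite gtnNdvd //; lia.
by have := congr1 (fun t => t * chi p.-1) pL0; rewrite /= mul0r -mulrA chiVr // mulr1.
Qed.

End GaussSums.

Section MulMonoidIso.
Variables (R S : comNzRingType) (f : R -> S).
Hypothesis f_iso : mul_monoid_iso f.

Let f_bij : bijective f. Proof. by case: f_iso. Qed.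
Let f1 : f 1 = 1. Proof. by case: f_iso. Qed.
Let fM x y : f (x * y) = f x * f y. Proof. by case: f_iso. Qed.

Lemma mul_monoid_iso0 : f 0 = 0.
Proof. by have [g _ gK] := f_bij; rewrite -(mul0r (g 0)) fM gK mulr0. Qed.

Lemma mul_monoid_isoX x n : f (x ^+ n) = f x ^+ n.
Proof. by elim: n => [|n IHn]; rewrite ?expr0 // !exprS fM IHn. Qed.

Lemma mul_monoid_iso_lreg x y : GRing.lreg (x - y) -> GRing.lreg (f x - f y).
Proof.
have [g fK gK] := f_bij; move=> reg_xy; apply: GRing.mulrI0_lreg => z.
rewrite -(gK z) mulrBl -!fM => /eqP; rewrite subr_eq0 => /eqP /(bij_inj f_bij) xy.
suff -> : g z = 0 by exact: mul_monoid_iso0.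
by apply: reg_xy; rewrite mulrBl xy subrr mulr0.
Qed.

Lemma mul_monoid_iso_frobenius_inj q :
  injective (fun x : R => x ^+ q) -> injective (fun y : S => y ^+ q).
Proof.
have [g fK gK] := f_bij; move=> frob_inj y y' /= yy'.
rewrite -(gK y) -(gK y'); congr f; apply: frob_inj; apply: (bij_inj f_bij).
by rewrite /= !mul_monoid_isoX !gK.
Qed.

Lemma mul_monoid_iso_roots n :
  (forall c : R, exists b, b ^+ n = c) -> forall c : S, exists b, b ^+ n = c.
Proof.
have [g fK gK] := f_bij; move=> roots c; have [b bn] := roots (g c).
by exists (f b); rewrite -mul_monoid_isoX bn gK.
Qed.

End MulMonoidIso.

Lemma radically_closed_roots (R : comNzRingType) n :
  radically_closed R -> (0 < n)%N -> forall c : R, exists b, b ^+ n = c.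
Proof.
move=> rad n_gt0 c; have [[|b s] Xn_c] := rad n c n_gt0.
  have := congr1 (size : {poly R} -> nat) Xn_c.
  by rewrite big_nil size_XnsubC // size_poly1 => -[n0]; rewrite n0 in n_gt0.
exists b; apply/eqP; rewrite -subr_eq0; apply/eqP.
have := congr1 (fun P => P.[b]) Xn_c; rewrite /= big_cons hornerM hornerXsubC subrr mul0r.
by rewrite hornerD hornerN hornerXn hornerC.
Qed.

Lemma natr_eq_mod (R : nzRingType) p a b : p \in [pchar R] ->
  (a%:R == b%:R :> R) = (a == b %[mod p]).
Proof.
move=> pR; wlog le_ba : a b / (b <= a)%N.
  by move=> wl; case: (leqP b a) => [|/ltnW] ?; [|rewrite eq_sym [RHS]eq_sym]; apply: wl.
by rewrite eqn_mod_dvd // (dvdn_pcharf pR) natrB // subr_eq0.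
Qed.

Lemma natf_expp1 (F : fieldType) p a : p \in [pchar F] -> ~~ (p %| a)%N ->
  (a%:R : F) ^+ p.-1 = 1.
Proof.
move=> pF pNa; have a_neq0 : (a%:R : F) != 0 by rewrite -(dvdn_pcharf pF).
apply: (mulfI a_neq0); rewrite -exprS prednK ?prime_gt0 ?(pcharf_prime pF) // mulr1.
exact: (pFrobenius_aut_nat pF).
Qed.

Lemma lreg_alg (F : fieldType) (A : lalgType F) (k : F) : k != 0 -> GRing.lreg (k%:A : A).
Proof.
move=> k_neq0; apply: GRing.mulrI0_lreg => x; rewrite mulr_algl.
by move/(congr1 (fun y => k^-1 *: y)); rewrite scalerA mulVf // scale1r scaler0.
Qed.

Lemma natr2_eq0_sqr_inj (S : nzRingType) : injective (fun x : S => x ^+ 2) -> 2%:R = 0 :> S.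
Proof.
move=> sqr_inj; have m1 : -1 = 1 :> S by apply: sqr_inj; rewrite /= sqrrN.
by rewrite -[2%:R]/(1 + 1) -{1}m1 addNr.
Qed.

Theorem lemma1p5p6 (p : nat) (K : closedFieldType) (R : comAlgType K)
  (S : comNzRingType) (f : R -> S) :
  is_alg_closure_Fp p K ->
  perfect_ring p R ->
  radically_closed R ->
  mul_monoid_iso f ->
  p \in [pchar S].
Proof.
case=> p_pr [pK _] perf rad iso; have [_ f1 fM] := iso.
have frobS := mul_monoid_iso_frobenius_inj iso (bij_inj perf).
rewrite inE p_pr /=; apply/eqP.
have [p_le2|p_gt2] := leqP p 2.
  have p2 : p = 2%N by move: (prime_gt1 p_pr) p_le2; lia.
  by rewrite p2 in frobS *; apply: natr2_eq0_sqr_inj.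
pose chi a := f a%:R.
have chi_alg a : chi a = f (in_alg R a%:R) by rewrite rmorph_nat.
apply: (natr_p_eq0 (chi := chi) p_pr p_gt2) => //.
- by move=> a b; rewrite /chi natrM fM.
- by move=> a; rewrite /chi GRing.natr_mod_pchar // (pchar_lalg R).
- move=> a pNa; rewrite chi_alg -(mul_monoid_isoX iso) -rmorphXn natf_expp1 //.
  by rewrite rmorph1.
- move=> a b ab; rewrite !chi_alg; apply: (mul_monoid_iso_lreg iso).
  by rewrite -rmorphB; apply: lreg_alg; rewrite subr_eq0 (natr_eq_mod _ _ pK).
- apply: (mul_monoid_iso_roots iso); apply: radically_closed_roots => //.
  by move: (prime_gt1 p_pr); lia.
Qed.
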